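(* Let $\gamma$ be a partition. Then $\gamma$ is $n$-colorless if and only if there exists $k\in\hat I$ such that $v^{(k)}(\gamma)\in\mathbb Z_{\ge0}^n$. Moreover, if $\gamma$ is $n$-colorless, then $v^{(k)}(\gamma)=(\delta_{i,k})_{i\in\hat I}$ for all $k\in\hat I$.
   Context: Fix $n\ge3$ and let $\hat I=\{0,1,\dots,n-1\}$, with residues mod $n$. For a partition $\gamma$ let $Y(\gamma)=\{(x,y)\in\mathbb Z_{\ge1}^2:\gamma_x\ge y\}$. The partition $\gamma$ is $n$-colorless if, for each residue $i$ mod $n$, the number of boxes $(x,y)\in Y(\gamma)$ with $x-y\equiv i\pmod n$ is the same. Corners: let $\gamma'_y=|\{x:\gamma_x\ge y\}|$ be the conjugate partition. - $(x,y)\in\mathbb Z_{\ge1}^2$ is a convex corner of $\gamma$ if $\gamma'_{y+1}<\gamma'_y=x$. - $(x,y)$ is a concave corner if $\gamma'_y=x-1$ and either $y=1$ or $\gamma'_{y-1}>x-1$. For $k,i\in\hat I$ let $CC_i^{(k)}(\gamma)$ (resp. $CV_i^{(k)}(\gamma)$) be the set of concave (resp. convex) corners $(x,y)$ with $k+x-y\equiv i\pmod n$. Define $v^{(k)}(\gamma)\in\mathbb Z^n$ (coordinates indexed by $\hat I$) by $v^{(k)}(\gamma)_i=|CC_i^{(k)}(\gamma)|-|CV_i^{(k)}(\gamma)|$. *)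

From mathcomp Require Import all_boot all_order all_algebra.
Set Implicit Arguments. Unset Strict Implicit. Unset Printing Implicit Defensive.
Import GRing.Theory Num.Theory.

(* A partition is a weakly decreasing finite list of positive naturals;
   gamma_x (x >= 1) is [part g x] = nth 0 g x.-1, and 0 beyond the length. *)
Definition is_partition (g : seq nat) : bool :=
  sorted geq g && all (fun a => 0 < a) g.

Definition part (g : seq nat) (x : nat) : nat := nth 0 g x.-1.

Definition conjp (g : seq nat) (y : nat) : nat := count (fun a => y <= a) g.

Definition in_diagram (g : seq nat) (x y : nat) : bool :=
  [&& 0 < x, 0 < y & y <= part g x].

Definition res (n k x y : nat) : int := ((Posz k + Posz x - Posz y)%R %% Posz n)%Z.

(* all boxes and corners lie in [1, bnd g] x [1, bnd g] *)
Definition bnd (g : seq nat) : nat := (size g + head 0 g).+1.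

Definition nboxes (n : nat) (g : seq nat) (i : nat) : nat :=
  \sum_(1 <= x < (bnd g).+1) \sum_(1 <= y < (bnd g).+1)
     (in_diagram g x y && (res n 0 x y == Posz i)).

Definition colorless (n : nat) (g : seq nat) : Prop :=
  forall i j : 'I_n, nboxes n g i = nboxes n g j.

Definition convex_corner (g : seq nat) (x y : nat) : bool :=
  [&& 0 < x, 0 < y, conjp g y.+1 < conjp g y & conjp g y == x].

Definition concave_corner (g : seq nat) (x y : nat) : bool :=
  [&& 0 < x, 0 < y, conjp g y == x.-1 & (y == 1) || (conjp g y.-1 > x.-1)].

Definition nCC (n : nat) (g : seq nat) (k i : nat) : nat :=
  \sum_(1 <= x < (bnd g).+1) \sum_(1 <= y < (bnd g).+1)
     (concave_corner g x y && (res n k x y == Posz i)).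

Definition nCV (n : nat) (g : seq nat) (k i : nat) : nat :=
  \sum_(1 <= x < (bnd g).+1) \sum_(1 <= y < (bnd g).+1)
     (convex_corner g x y && (res n k x y == Posz i)).

Definition vk (n : nat) (g : seq nat) (k i : 'I_n) : int :=
  (Posz (nCC n g k i) - Posz (nCV n g k i))%R.

Arguments vk : clear implicits.
Arguments nCC : clear implicits.
Arguments nCV : clear implicits.
Arguments nboxes : clear implicits.

From mathcomp Require Import all_boot all_order all_algebra zify ring.
Set Implicit Arguments. Unset Strict Implicit. Unset Printing Implicit Defensive.
Import GRing.Theory Num.Theory.

(* Weight every cell (x, y) by w (x - y), for an arbitrary abelian-group
   valued w.  Summing the second differences [lap w] over the boxes of a
   partition telescopes along each row, and the boundary terms left over are
   exactly the corners: concave minus convex corners give w 0 minus that sum.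
   Taking for w the indicator of a residue class mod n yields
   v^(k)_i = [i = k] - lap N (i - k), where N c counts the boxes of color c.
   Conversely, if v^(k) >= 0 then the n-periodic N satisfies
   lap N c <= [c = 0 mod n]; summing c * ([c = 0] - lap N c) over a period
   gives n (N 0 - N (-1)), which lies in [0, n - 1], hence vanishes, and this
   forces lap N = 0 and N constant, i.e. the partition is colorless. *)

Section PartitionShape.

Variable g : seq nat.
Hypothesis sorted_g : sorted geq g.

Lemma partS_le x : part g x.+1 <= part g x.
Proof.
case: x => [|x] //; rewrite /part /=.
elim: g sorted_g x => [|a s IH] sg x /=; first by rewrite !nth_nil.
case: x => [|x] /=; last exact: IH (path_sorted sg) x.
by case: s sg {IH} => //= b s /andP[].
Qed.

Lemma part_lt_bnd x : part g x < bnd g.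
Proof.
suff: part g x <= head 0 g by rewrite /bnd; lia.
by elim: x => [|x IH]; [case: g | exact: leq_trans (partS_le x) IH].
Qed.

Lemma leq_conjp x y : 0 < x -> 0 < y -> (x <= conjp g y) = (y <= part g x).
Proof.
rewrite /conjp /part.
elim: g sorted_g x => [|a s IH] /= sg x hx hy; first by rewrite nth_nil; lia.
have s_le_a : {in s, forall b, b <= a}.
  by apply/allP; apply: order_path_min sg => u v w /= h1 h2; apply: leq_trans h2 h1.
have count0 : a < y -> count (leq y) s = 0.
  move=> ya; rewrite -(count_pred0 s); apply: eq_in_count => b /s_le_a ba /=.
  by apply/negbTE; rewrite -ltnNge; apply: leq_ltn_trans ya.
case: x hx => [|[|x]] // _ /=.
  by case: (leqP y a) => [|/count0 ->].
case: (leqP y a) => ya; first by rewrite add1n ltnS IH //; exact: path_sorted sg.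
rewrite count0 //; symmetry; apply/negbTE; rewrite -ltnNge.
case: (ltnP x (size s)) => [xs|/(nth_default 0) -> //].
exact: leq_ltn_trans (s_le_a _ (mem_nth 0 xs)) ya.
Qed.

Definition concave_row x := (x == 1) || (part g x < part g x.-1).
Definition convex_row x := part g x.+1 < part g x.

Lemma concave_cornerE x y : 0 < x -> 0 < y ->
  concave_corner g x y = (y == (part g x).+1) && concave_row x.
Proof.
rewrite /concave_corner /concave_row => hx hy; rewrite hx hy eqn_leq leqNgt /=.
have := partS_le x.-1; rewrite prednK //.
case: x hx => [|[|x]] // _; case: y hy => [|[|y]] // _;
  rewrite /= ?leq0n ?leq_conjp //=; lia.
Qed.

Lemma convex_cornerE x y : 0 < x -> 0 < y ->
  convex_corner g x y = (y == part g x) && convex_row x.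
Proof.
rewrite /convex_corner /convex_row => hx hy; rewrite hx hy /=.
have := leq_conjp hx hy; have := leq_conjp (ltn0Sn x) hy.
have := leq_conjp hx (ltn0Sn y); have := partS_le x; lia.
Qed.

End PartitionShape.

Lemma part_default g x : bnd g <= x -> part g x = 0.
Proof. by move=> h; rewrite /part nth_default //; move: h; rewrite /bnd; lia. Qed.

Local Open Scope ring_scope.

Definition lap (V : zmodType) (w : int -> V) (c : int) : V :=
  w c *+ 2 - w (c + 1) - w (c - 1).

Lemma lapE (V : zmodType) (w : int -> V) c :
  lap w c = (w c - w (c - 1)) - (w (c + 1) - w c).
Proof. by rewrite /lap opprB [RHS]addrAC addrA mulr2n addrAC. Qed.

Lemma sum_lap_column (V : zmodType) (w : int -> V) (x : int) (m : nat) :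
  \sum_(1 <= y < m.+1) lap w (x - y%:Z) =
  (w (x - m%:Z) - w (x - m%:Z - 1)) - (w x - w (x - 1)).
Proof.
pose f (k : nat) := w (x - k%:Z) - w (x - k%:Z - 1).
transitivity (f m - f 0%N); last by rewrite /f subr0.
rewrite big_add1 -telescope_sumr //; apply: eq_big_nat => k _.
rewrite /f; have -> : x - k%:Z = x - k.+1%:Z + 1 by lia.
by rewrite lapE addrK.
Qed.

Section ContentSums.

Variable V : zmodType.
Variable g : seq nat.

Definition content_sum (P : nat -> nat -> bool) (w : int -> V) : V :=
  \sum_(1 <= x < (bnd g).+1) \sum_(1 <= y < (bnd g).+1)
     (if P x y then w (x%:Z - y%:Z) else 0).

Lemma content_sum_lap P (w : int -> V) t :
  content_sum P (lap (fun c => w (c - t))) =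
  lap (fun s => content_sum P (fun c => w (c - s))) t.
Proof.
rewrite /lap /content_sum -sumrMnl -!sumrB; apply: eq_bigr => x _.
rewrite -sumrMnl -!sumrB; apply: eq_bigr => y _; case: (P x y); last by rewrite mul0rn !subr0.
by rewrite [RHS]addrAC; congr (_ - w _ - w _); lia.
Qed.

Hypothesis sorted_g : sorted geq g.

Lemma content_sum_concave w : content_sum (concave_corner g) w =
  \sum_(1 <= x < (bnd g).+1) (if concave_row g x then w (x%:Z - (part g x).+1%:Z) else 0).
Proof.
apply: eq_big_nat => x /andP[x0 _]; rewrite -big_mkcond.
rewrite (@congr_big_nat _ _ _ 1 _ 1 (bnd g).+1 _ (fun y => concave_row g x && (y == (part g x).+1))
  _ (fun y => w (x%:Z - y%:Z))) //; last by move=> y /andP[y0 _]; rewrite concave_cornerE // andbC.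
by rewrite big_nat1_cond_eq /= ltnS part_lt_bnd.
Qed.

Lemma content_sum_convex w : content_sum (convex_corner g) w =
  \sum_(1 <= x < (bnd g).+1) (if convex_row g x then w (x%:Z - (part g x)%:Z) else 0).
Proof.
apply: eq_big_nat => x /andP[x0 _]; rewrite -big_mkcond.
rewrite (@congr_big_nat _ _ _ 1 _ 1 (bnd g).+1 _ (fun y => convex_row g x && (y == part g x))
  _ (fun y => w (x%:Z - y%:Z))) //; last by move=> y /andP[y0 _]; rewrite convex_cornerE // andbC.
rewrite big_nat1_cond_eq; congr (if _ then _ else _); apply: andb_idl.
by rewrite /convex_row; have := part_lt_bnd sorted_g x; lia.
Qed.

Lemma content_sum_diagram w : content_sum (in_diagram g) w =
  \sum_(1 <= x < (bnd g).+1) \sum_(1 <= y < (part g x).+1) w (x%:Z - y%:Z).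
Proof.
apply: eq_big_nat => x /andP[x0 _]; rewrite -big_mkcond.
have p_le : ((part g x).+1 <= (bnd g).+1)%N by rewrite ltnS ltnW ?part_lt_bnd.
rewrite [RHS](big_nat_widen _ _ _ _ _ p_le).
by apply: congr_big_nat => // y /andP[y0 _]; rewrite /in_diagram x0 y0 ltnS.
Qed.

Let lower_end (w : int -> V) x := w (x%:Z - (part g x).+1%:Z).
Let upper_end (w : int -> V) x := w (x%:Z - (part g x)%:Z).
Let open_row (w : int -> V) x := if concave_row g x then 0 else lower_end w x.

(* A row without a convex corner is as long as the next one, so its upper end
   is the lower end of the next row, where no concave corner sits. *)
Lemma corner_row_step w x : (0 < x)%N ->
  (if concave_row g x then lower_end w x else 0) -
  (if convex_row g x then upper_end w x else 0) =
  (lower_end w x - upper_end w x) + (open_row w x.+1 - open_row w x).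
Proof.
move=> x0; rewrite /open_row.
have -> : concave_row g x.+1 = convex_row g x by case: x x0.
have : ~~ convex_row g x -> lower_end w x.+1 = upper_end w x.
  rewrite /convex_row /lower_end /upper_end -leqNgt => le_x_xS.
  by apply: congr1; have := partS_le sorted_g x; lia.
case: (concave_row g x); case: (convex_row g x) => [_|->//]; rewrite ?subr0 ?sub0r.
- by rewrite addr0.
- by rewrite subrK.
- by rewrite addrAC subrr add0r.
- by rewrite addrA subrK subrr.
Qed.

Lemma content_sum_corners w :
  content_sum (concave_corner g) w - content_sum (convex_corner g) w =
  w 0 - content_sum (in_diagram g) (lap w).
Proof.
set B := bnd g.
have diagram : content_sum (in_diagram g) (lap w) =
    - \sum_(1 <= x < B.+1) (lower_end w x - upper_end w x) - (w B%:Z - w 0).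
  have telescope : \sum_(1 <= x < B.+1) (w x%:Z - w (x%:Z - 1)) = w B%:Z - w 0.
    have := telescope_sumr (fun k : nat => w (k%:Z - 1)) (ltn0Sn B).
    have succ_pred (k : nat) : k.+1%:Z - 1 = k by lia.
    rewrite succ_pred subrr => <-; apply: eq_big_nat => x _.
    by rewrite succ_pred.
  rewrite content_sum_diagram -telescope -sumrN -sumrB.
  apply: eq_big_nat => x _; rewrite sum_lap_column !opprB /lower_end /upper_end.
  by have -> : x%:Z - (part g x).+1%:Z = x%:Z - (part g x)%:Z - 1 by lia.
have open_first : open_row w 1 = 0 by [].
have open_last : open_row w B.+1 = w B%:Z.
  by rewrite /open_row /concave_row /lower_end !part_default ?leqnSn //= /B.
rewrite content_sum_concave content_sum_convex -sumrB.
transitivity (\sum_(1 <= x < B.+1) (lower_end w x - upper_end w x) +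
              \sum_(1 <= x < B.+1) (open_row w x.+1 - open_row w x)).
  by rewrite -big_split; apply: eq_big_nat => x /andP[x0 _]; exact: corner_row_step.
rewrite telescope_sumr // open_first open_last subr0 diagram.
set S := \sum_(1 <= x < B.+1) _.
by rewrite (opprB (- S)) opprK addrA subrKC addrC.
Qed.

End ContentSums.

Lemma sum_mul_lap (F : int -> int) (m : nat) :
  \sum_(0 <= c < m) c%:Z * lap F c =
  \sum_(0 <= c < m) (F (c%:Z + 1) - F c%:Z) - m%:Z * (F m%:Z - F (m%:Z - 1)).
Proof.
elim: m => [|m IH]; first by rewrite !big_geq // mul0r subr0.
rewrite !big_nat_recr //= IH /lap.
have -> : m.+1%:Z = m%:Z + 1 by lia.
rewrite addrK; ring.
Qed.

Section PeriodicLaplacian.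

Variables (n : nat) (F : int -> int).
Hypothesis n_gt0 : (0 < n)%N.
Hypothesis F_mod : forall c, F (c %% n)%Z = F c.

Lemma periodicDn c : F (c + n%:Z) = F c.
Proof. by rewrite -F_mod modzDr F_mod. Qed.

Lemma sum_diff_period : \sum_(0 <= c < n) (F (c%:Z + 1) - F c%:Z) = 0.
Proof.
transitivity (F n%:Z - F 0%:Z); last by rewrite -{1}(add0r n%:Z) periodicDn subrr.
rewrite -(telescope_sumr (fun k : nat => F k%:Z)) //; apply: eq_big_nat => c _.
by rewrite -addn1 PoszD.
Qed.

Lemma sum_lap_period : \sum_(0 <= c < n) lap F c%:Z = 0.
Proof.
pose d c := F (c + 1) - F c.
transitivity (- d (n%:Z - 1) - - d (0%:Z - 1)).
  rewrite -(telescope_sumr (fun k : nat => - d (k%:Z - 1))) //.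
  apply: eq_big_nat => c _; rewrite lapE /d.
  have -> : c.+1%:Z - 1 = c%:Z by lia.
  by rewrite subrK; ring.
have F_last : F n%:Z = F 0 by rewrite -(periodicDn 0) add0r.
have F_pred : F (n%:Z - 1) = F (-1) by rewrite -(periodicDn (-1)) addrC.
by rewrite /d subrK F_last F_pred sub0r subrr.
Qed.

Lemma lap_period_eq0 :
  (forall c : nat, (c < n)%N -> lap F c%:Z <= (c == 0%N)%:Z) ->
  forall c : nat, (c < n)%N -> lap F c%:Z = 0.
Proof.
move=> lap_le.
pose u (c : nat) := (c == 0%N)%:Z - lap F c%:Z.
have u_ge0 c : (0 <= c < n)%N && true -> 0 <= u c.
  by rewrite andbT => /andP[_ /lap_le]; rewrite subr_ge0.
have cu_ge0 c : (0 <= c < n)%N && true -> 0 <= c%:Z * u c.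
  by move/u_ge0; apply: mulr_ge0.
have sum_u : \sum_(0 <= c < n) u c = 1.
  rewrite sumrB sum_lap_period subr0 -(prednK n_gt0) big_nat_recl //.
  by rewrite big1 ?addr0.
have sum_cu : \sum_(0 <= c < n) c%:Z * u c = n%:Z * (F n%:Z - F (n%:Z - 1)).
  rewrite (eq_bigr (fun c : nat => - (c%:Z * lap F c%:Z))); last first.
    by move=> [|c] _; rewrite /u ?mul0r ?oppr0 // mulrBr mulr0 sub0r.
  by rewrite sumrN sum_mul_lap sum_diff_period sub0r opprK.
have last_diff : F n%:Z - F (n%:Z - 1) = 0.
  have : 0 <= \sum_(0 <= c < n) c%:Z * u c.
    by rewrite big_nat_cond; apply: sumr_ge0.
  have : \sum_(0 <= c < n) c%:Z * u c <= \sum_(0 <= c < n) (n%:Z - 1) * u c.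
    rewrite (big_nat_cond _ _ _ _ xpredT) (big_nat_cond _ _ _ _ xpredT); apply: ler_sum => c c_lt.
    by apply: (ler_wpM2r (u_ge0 c c_lt)); move: c_lt; rewrite andbT; lia.
  by rewrite -mulr_sumr sum_u sum_cu; nia.
have u0 c : (0 < c < n)%N -> u c = 0.
  move=> /andP[c_gt0 c_lt]; move: sum_cu; rewrite last_diff mulr0 big_nat_cond => /eqP.
  rewrite psumr_eq0 // => /allP /(_ c); rewrite mem_index_iota c_lt /= => /(_ isT).
  by rewrite mulf_eq0 => /orP[/eqP|/eqP //]; lia.
have u_first : u 0%N = 1.
  move: sum_u; rewrite -(prednK n_gt0) big_nat_recl // big1_seq ?addr0 //.
  by move=> c; rewrite mem_index_iota => c_lt; apply: u0; lia.
move=> [_|c c_lt]; first by move: u_first; rewrite /u; lia.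
by have := u0 c.+1 c_lt; rewrite /u sub0r => /eqP; rewrite oppr_eq0 => /eqP.
Qed.

Lemma modz_absz c : (c %% n)%Z = (absz (c %% n)%Z)%:Z.
Proof. by rewrite gez0_abs // modz_ge0 // lt0n_neq0. Qed.

Lemma lap_modz c : lap F (c %% n)%Z = lap F c.
Proof. by rewrite /lap -(F_mod (_ + 1)) -(F_mod (_ - 1)) !modzDml !F_mod. Qed.

Lemma lap_period_const :
  (forall c : nat, (c < n)%N -> lap F c%:Z = 0) -> forall c, F c = F 0.
Proof.
move=> lap0.
have lap0_all c : lap F c = 0.
  rewrite -lap_modz modz_absz; apply: lap0; rewrite -ltz_nat -modz_absz ltz_pmod //.
have diff_const (k : nat) : F (k%:Z + 1) - F k%:Z = F 1 - F 0.
  elim: k => // k <-; move/eqP: (lap0_all (k.+1)); rewrite lapE subr_eq0 => /eqP.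
  have -> : k.+1%:Z - 1 = k%:Z by lia.
  by have -> : k.+1%:Z = k%:Z + 1 by lia.
have diff0 : F 1 - F 0 = 0.
  move: sum_diff_period; rewrite (eq_big_nat _ _ (fun k _ => diff_const k)).
  rewrite sumr_const_nat subn0 => /eqP; rewrite mulrn_eq0 eqn0Ngt n_gt0 /=.
  by move/eqP.
have F_nat (k : nat) : F k%:Z = F 0.
  elim: k => // k IH; move/eqP: (diff_const k); rewrite diff0 subr_eq0 IH => /eqP <-.
  by rewrite -addn1 PoszD.
by move=> c; rewrite -F_mod modz_absz F_nat.
Qed.

End PeriodicLaplacian.

Section Colors.

Variables (n : nat) (g : seq nat).

Lemma count_cells_res (P : nat -> nat -> bool) (k i : nat) : (i < n)%N ->
  Posz (\sum_(1 <= x < (bnd g).+1) \sum_(1 <= y < (bnd g).+1)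
          (P x y && (res n k x y == Posz i))) =
  content_sum g P (fun c => Posz (n %| c - (i%:Z - k%:Z))%Z).
Proof.
move=> i_lt; rewrite -natz natr_sum; apply: eq_bigr => x _.
rewrite natr_sum; apply: eq_bigr => y _.
have -> : res n k x y == Posz i = (n %| x%:Z - y%:Z - (i%:Z - k%:Z))%Z.
  rewrite /res -{1}(@modz_small i n) ?eqz_mod_dvd; last by lia.
  by congr (_ %| _)%Z; ring.
by rewrite natz; case: P.
Qed.

Hypothesis n_gt0 : (0 < n)%N.

Definition ncolor (c : int) : int := Posz (nboxes n g (absz (c %% n)%Z)).

Lemma ncolorE t : ncolor t = content_sum g (in_diagram g) (fun c => Posz (n %| c - t)%Z).
Proof.
rewrite /ncolor /nboxes -natz natr_sum; apply: eq_bigr => x _.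
rewrite natr_sum; apply: eq_bigr => y _.
rewrite /res add0r -modz_absz // -eqz_mod_dvd natz.
by case: in_diagram.
Qed.

Lemma colorlessE : colorless n g <-> forall c, ncolor c = ncolor 0.
Proof.
have ncolor_ord (i : 'I_n) : ncolor i%:Z = Posz (nboxes n g i).
  by have i_lt := ltn_ord i; rewrite /ncolor modz_small //; lia.
split=> [colorless_g c | ncolor_const i j].
  have c_lt : (absz (c %% n)%Z < n)%N by rewrite -ltz_nat -modz_absz ?ltz_pmod.
  by rewrite /ncolor mod0z (colorless_g (Ordinal c_lt) (Ordinal n_gt0)).
by apply/eqP; rewrite -eqz_nat -!ncolor_ord !ncolor_const.
Qed.

Hypothesis sorted_g : sorted geq g.

Lemma vkE (k i : 'I_n) : vk n g k i = Posz (i == k) - lap ncolor (i%:Z - k%:Z).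
Proof.
have k_lt := ltn_ord k; have i_lt := ltn_ord i.
rewrite /vk /nCC /nCV !count_cells_res // (content_sum_corners sorted_g).
rewrite (content_sum_lap _ _ (fun c => Posz (n %| c)%Z)) /lap.
rewrite ![ncolor _]ncolorE.
congr (Posz (nat_of_bool _) - _).
by rewrite sub0r opprB -eqz_mod_dvd !modz_small ?eqz_nat 1?eq_sym.
Qed.

End Colors.

Local Close Scope ring_scope.

Theorem mainTheorem10 (n : nat) (g : seq nat) :
  2 < n -> is_partition g ->
  (colorless n g <-> exists k : 'I_n, forall i : 'I_n, (0 <= vk n g k i)%R) /\
  (colorless n g -> forall k i : 'I_n, vk n g k i = Posz (i == k)).
Proof.
move=> /ltnW/ltnW n_gt0 /andP[sorted_g _].
have ncolor_mod c : ncolor n g (c %% n)%Z = ncolor n g c by rewrite /ncolor modz_mod.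
have vk_colorless : colorless n g -> forall k i : 'I_n, vk n g k i = Posz (i == k).
  move=> /(colorlessE g n_gt0) ncolor_const k i.
  by rewrite vkE // /lap !ncolor_const mulr2n addrK subrr subr0.
split=> //; split=> [colorless_g | [k vk_ge0]].
  by exists (Ordinal n_gt0) => i; rewrite vk_colorless.
apply/(colorlessE g n_gt0)/(lap_period_const n_gt0 ncolor_mod).
apply: (lap_period_eq0 n_gt0 ncolor_mod) => c c_lt.
have k_lt := ltn_ord k; have := vk_ge0 (Ordinal (ltn_pmod (c + k) n_gt0)).
rewrite vkE //= -(lap_modz ncolor_mod).
have -> : ((Posz ((c + k) %% n) - Posz k)%R %% n)%Z = Posz c.
  by rewrite -modz_nat modzDml PoszD addrK modz_small //; lia.
have -> : (Ordinal (ltn_pmod (c + k) n_gt0) == k) = (c == 0).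
  rewrite -val_eqE /= -[X in _ == X](modn_small k_lt) -[X in _ == X %% n]add0n.
  by rewrite eqn_modDr mod0n modn_small.
by rewrite subr_ge0.
Qed.
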